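(* Let $A$ be a linear matrix. Then $A$ is balanced if and only if $A$ does not contain any submatrix congruent to $C_3$ and $G_A$ is a diamond-free graph that contains neither an odd hole nor an HOH-free multisun as an induced subgraph.
   Context: A $\{0,1\}$-matrix is linear if it has no $2\times2$ submatrix with all entries $1$; it is balanced if it has no square submatrix of odd order with exactly two 1's in every row and column. Matrices are congruent if one is obtained from the other by permuting rows and columns; $C_3$ is the $3\times3$ matrix with $c_{i,j}=1$ iff $j\in\{i,i+1\}$ mod $3$. The intersection graph $G_A$ has the columns of $A$ as vertices, two being adjacent iff they are non-orthogonal. A graph is diamond-free if it has no induced $K_4$ minus an edge; an odd hole is an induced cycle of odd length at least $5$. A multisun is a diamond-free graph $G$ of odd order whose maximal cliques of size $2$ form the edge set of a Hamiltonian cycle $C$ (the rim); the other maximal cliques consist of pairwise nonconsecutive vertices of $C$ (inscribed cliques). A sub-multisun is obtained by deleting the edge sets of some, but not all, inscribed cliques. A multisun is HOH-free if neither it nor any of its sub-multisuns contains an odd hole as an induced subgraph. *)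

From mathcomp Require Import all_boot all_algebra.
Set Implicit Arguments. Unset Strict Implicit. Unset Printing Implicit Defensive.

Definition linear_mx (m n : nat) (A : 'M[bool]_(m, n)) : Prop :=
  ~ exists (r1 r2 : 'I_m) (c1 c2 : 'I_n),
      [/\ r1 != r2, c1 != c2 & [&& A r1 c1, A r1 c2, A r2 c1 & A r2 c2]].

Definition balanced_mx (m n : nat) (A : 'M[bool]_(m, n)) : Prop :=
  ~ exists (k : nat) (f : 'I_k -> 'I_m) (g : 'I_k -> 'I_n),
      [/\ odd k, injective f, injective g,
          (forall i : 'I_k, #|[set j : 'I_k | A (f i) (g j)]| = 2) &
          (forall j : 'I_k, #|[set i : 'I_k | A (f i) (g j)]| = 2)].

Definition C3 (i j : 'I_3) : bool := (val j == val i) || (val j == (val i).+1 %% 3).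

(* A contains a submatrix congruent to C_3 (rows/columns chosen injectively,
   in arbitrary order, which accounts for the permutations). *)
Definition has_C3 (m n : nat) (A : 'M[bool]_(m, n)) : Prop :=
  exists (f : 'I_3 -> 'I_m) (g : 'I_3 -> 'I_n),
    [/\ injective f, injective g & forall i j, A (f i) (g j) = C3 i j].

Definition GA (m n : nat) (A : 'M[bool]_(m, n)) : rel 'I_n :=
  fun c c' => (c != c') && [exists r : 'I_m, A r c && A r c'].

Section Graphs.
Variable V : finType.

Definition is_clique (S : {set V}) (e : rel V) (K : {set V}) : Prop :=
  K \subset S /\ forall x y, x \in K -> y \in K -> x != y -> e x y.

Definition is_maxclique (S : {set V}) (e : rel V) (K : {set V}) : Prop :=
  is_clique S e K /\
  forall K', is_clique S e K' -> K \subset K' -> K' = K.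

Definition diamond_free (S : {set V}) (e : rel V) : Prop :=
  ~ exists a b c d : V,
      [/\ uniq [:: a; b; c; d], all (mem S) [:: a; b; c; d],
          [&& e a b, e a c, e b c, e a d & e b d] & ~~ e c d].

Definition cyc_adj (k : nat) (i j : 'I_k) : bool :=
  (val j == (val i).+1 %% k) || (val i == (val j).+1 %% k).

Definition has_odd_hole (S : {set V}) (e : rel V) : Prop :=
  exists (k : nat) (f : 'I_k -> V),
    [/\ odd k, 5 <= k, injective f, (forall i, f i \in S) &
        forall i j, e (f i) (f j) = cyc_adj i j].

Definition multisun_cycle (S : {set V}) (e : rel V) (k : nat) (f : 'I_k -> V) : Prop :=
  [/\ injective f, [set f i | i in 'I_k] = S,
      (forall i j : 'I_k, i != j ->
          (is_maxclique S e [set f i; f j] <-> cyc_adj i j)) &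
      (forall K, is_maxclique S e K -> #|K| != 2 ->
          forall i j : 'I_k, f i \in K -> f j \in K -> ~~ cyc_adj i j)].

Definition multisun (S : {set V}) (e : rel V) : Prop :=
  [/\ odd #|S|, diamond_free S e &
      exists (k : nat) (f : 'I_k -> V), multisun_cycle S e f].

Definition inscribed (S : {set V}) (e : rel V) (K : {set V}) : Prop :=
  is_maxclique S e K /\ #|K| != 2.

Definition delete_cliques (e : rel V) (D : {set {set V}}) : rel V :=
  fun x y => e x y && ~~ [exists K in D, (x \in K) && (y \in K)].

Definition sub_multisun_sel (S : {set V}) (e : rel V) (D : {set {set V}}) : Prop :=
  [/\ D != set0, (forall K, K \in D -> inscribed S e K) &
      exists K, inscribed S e K /\ K \notin D].

Definition HOH_free_multisun (S : {set V}) (e : rel V) : Prop :=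
  [/\ multisun S e, ~ has_odd_hole S e &
      forall D, sub_multisun_sel S e D -> ~ has_odd_hole S (delete_cliques e D)].

End Graphs.

From mathcomp Require Import all_boot all_algebra zify.
From Stdlib Require Import Classical_Prop.

Set Implicit Arguments. Unset Strict Implicit. Unset Printing Implicit Defensive.

(* A {0,1}-matrix is unbalanced iff it contains the cycle matrix C_k of some
   odd order k >= 3: the entries of an odd 2-regular square submatrix split
   into cycles, one of which is odd.  For a linear matrix without C_3, any
   three pairwise non-orthogonal columns share a row, so every clique of G_A
   with at least three columns lies in a single row.  Hence a diamond would
   put two columns in two common rows, while an odd hole or the rim of a
   multisun yields an odd cycle submatrix.
   Conversely, take an odd cycle submatrix of minimal order k >= 5.  A row
   meeting two nonconsecutive columns of it meets a third one, for otherwise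
   it would split the cycle into two shorter ones, one of them odd.  So its
   columns induce a multisun, whose inscribed cliques are the rows meeting
   them in at least three columns.  An odd hole in a sub-multisun would again
   be an odd cycle submatrix on these columns, hence on all of them by
   minimality, which fails since a non-deleted inscribed clique would be a
   triangle in it. *)

Lemma succ_modn a k : a < k -> a.+1 %% k = if a.+1 < k then a.+1 else 0.
Proof.
move=> lt_ak; case: ifP => [/modn_small //|ge_ak].
have -> : a.+1 = k by lia.
by rewrite modnn.
Qed.

Lemma pred_modn j k : j < k -> (j + k.-1) %% k = if j == 0 then k.-1 else j.-1.
Proof.
move=> lt_jk; case: eqP => [->|j_neq0]; first by rewrite add0n modn_small //; lia.
have -> : j + k.-1 = j.-1 + k by lia.
by rewrite modnDr modn_small //; lia.
Qed.

Lemma modn_double a k : a < k + k -> a %% k = if a < k then a else a - k.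
Proof.
move=> lt_a2k; case: ifP => [/modn_small //|ge_ak].
have -> : a = (a - k) + k by lia.
by rewrite modnDr modn_small //; lia.
Qed.

Definition cycle_adj k a b := (b == a.+1 %% k) || (a == b.+1 %% k).

Lemma cyc_adj_inord k a b : a <= k -> b <= k ->
  cyc_adj (inord a : 'I_k.+1) (inord b) = cycle_adj k.+1 a b.
Proof. by move=> le_ak le_bk; rewrite /cyc_adj /cycle_adj /= !inordK. Qed.

Lemma cycle_adj_succ k a : cycle_adj k a (a.+1 %% k).
Proof. by rewrite /cycle_adj eqxx. Qed.

Lemma cycle_adj_sym k a b : cycle_adj k a b = cycle_adj k b a.
Proof. by rewrite /cycle_adj orbC. Qed.

Lemma cycle_adj_triangle k a b c : 4 <= k -> a < k -> b < k -> c < k ->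
  cycle_adj k a b -> cycle_adj k b c -> cycle_adj k a c -> False.
Proof.
rewrite /cycle_adj => k4 lt_ak lt_bk lt_ck.
by rewrite (succ_modn lt_ak) (succ_modn lt_bk) (succ_modn lt_ck); do 3!case: ifP; lia.
Qed.

Lemma succ_modn_neq k a : 1 < k -> a < k -> a.+1 %% k != a.
Proof. by move=> k2 lt_ak; rewrite (succ_modn lt_ak); case: ifP; lia. Qed.

Section CycleSubmatrix.
Variables (m n : nat) (A : 'M[bool]_(m, n)).

(* C_k on rows [r 0], ..., [r (k-1)] and columns [c 0], ..., [c (k-1)], with
   indices read modulo [k]; injectivity of [r] is then automatic for [k >= 3]
   ([cycle_submx_row_inj]). *)
Definition cycle_submx k (r : nat -> 'I_m) (c : nat -> 'I_n) :=
  (forall i j, i < k -> j < k -> c i = c j -> i = j) /\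
  (forall i j, i < k -> j < k -> A (r i) (c j) = (j == i) || (j == i.+1 %% k)).

Definition odd_cycle_submx k := [/\ odd k, 2 < k & exists r c, cycle_submx k r c].

Lemma cycle_submx_row_inj k r c : 2 < k -> cycle_submx k r c ->
  forall i j, i < k -> j < k -> r i = r j -> i = j.
Proof.
move=> k3 [_ rowE] i j lt_ik lt_jk eq_rij.
have lt_j1k : j.+1 %% k < k by rewrite ltn_pmod //; lia.
have in_row t : t < k -> A (r j) (c t) -> (t == i) || (t == i.+1 %% k).
  by move=> lt_tk; rewrite -eq_rij rowE.
have := in_row _ lt_jk; rewrite rowE // eqxx => /(_ isT).
have := in_row _ lt_j1k; rewrite rowE // eqxx orbT => /(_ isT).
by rewrite (succ_modn lt_ik) (succ_modn lt_jk); do 2!case: ifP; lia.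
Qed.

Lemma odd_cycle_submx_unbalanced k : odd_cycle_submx k -> ~ balanced_mx A.
Proof.
move=> [odd_k k3 [r [c cyc]]]; have [c_inj rowE] := cyc.
have k0 : 0 < k by lia.
apply; exists k, (fun i : 'I_k => r i), (fun j : 'I_k => c j); split => //.
- by move=> i j /(cycle_submx_row_inj k3 cyc (ltn_ord i) (ltn_ord j))/val_inj.
- by move=> i j /(c_inj _ _ (ltn_ord i) (ltn_ord j))/val_inj.
- move=> i; have -> : [set j : 'I_k | A (r i) (c j)] =
      [set i; Ordinal (ltn_pmod i.+1 k0)].
    by apply/setP => j; rewrite !inE -!val_eqE /= rowE.
  by rewrite cards2 -val_eqE /= eq_sym succ_modn_neq //; lia.
- move=> j; have lt_pj : (j + k.-1) %% k < k by rewrite ltn_pmod.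
  have -> : [set i : 'I_k | A (r i) (c j)] = [set j; Ordinal lt_pj].
    apply/setP => i; rewrite !inE -!val_eqE /= rowE //.
    by move: (ltn_ord i) (ltn_ord j); rewrite succ_modn // pred_modn //; do 2!case: ifP; lia.
  by rewrite cards2 -val_eqE /=; move: (ltn_ord j); rewrite pred_modn //; case: ifP; lia.
Qed.

Lemma has_C3_cycle_submx : has_C3 A <-> exists r c, cycle_submx 3 r c.
Proof.
split=> [[f [g [f_inj g_inj fgE]]] | [r [c cyc]]].
  exists (fun t => f (inord t)), (fun t => g (inord t)); split.
    by move=> i j lt_i3 lt_j3 /g_inj/(congr1 val); rewrite /= !inordK.
  by move=> i j lt_i3 lt_j3; rewrite fgE /C3 /= !inordK.
have [c_inj rowE] := cyc.
exists (fun i : 'I_3 => r i), (fun j : 'I_3 => c j); split.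
- by move=> i j /(cycle_submx_row_inj (ltnSn 2) cyc (ltn_ord i) (ltn_ord j))/val_inj.
- by move=> i j /(c_inj _ _ (ltn_ord i) (ltn_ord j))/val_inj.
- by move=> i j; rewrite rowE.
Qed.

Lemma cycle_submx_rot k r c s : 0 < k -> cycle_submx k r c ->
  cycle_submx k (fun t => r ((t + s) %% k)) (fun t => c ((t + s) %% k)).
Proof.
move=> k0 [c_inj rowE]; split.
  move=> i j lt_ik lt_jk /c_inj; rewrite !ltn_pmod // => /(_ isT isT)/eqP.
  by rewrite eqn_modDr !modn_small // => /eqP.
move=> i j lt_ik lt_jk; rewrite rowE ?ltn_pmod //.
have -> : ((i + s) %% k).+1 %% k = (i.+1 + s) %% k.
  by rewrite -addn1 modnDml addn1 addSn.
by rewrite !eqn_modDr (modn_small lt_jk) (modn_small lt_ik).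
Qed.

Lemma cycle_submx_chord k r c R j : cycle_submx k r c -> 2 <= j -> j < k ->
  A R (c 0) -> A R (c j) -> (forall l, 0 < l -> l < j -> ~~ A R (c l)) ->
  cycle_submx j.+1 (fun t => if t < j then r t else R) c.
Proof.
move=> [c_inj rowE] j2 lt_jk R0 Rj R_off; split=> [i t lt_ij lt_tj|i t lt_ij lt_tj].
  by apply: c_inj; lia.
case: ifP => lt_ij'.
  by rewrite rowE; try lia; rewrite !modn_small //; lia.
have -> : i = j by lia.
rewrite modnn; case: (posnP t) => [->|t0]; first by rewrite R0 orbT.
rewrite orbF; have [lt_tj'|ge_tj] := ltnP t j.
  by rewrite (negbTE (R_off _ t0 lt_tj')); apply/esym/eqP; lia.
have -> : t = j by lia.
by rewrite Rj eqxx.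
Qed.

Lemma cycle_submx_card (S : {set 'I_n}) k r c : cycle_submx k r c ->
  (forall t, t < k -> c t \in S) -> k <= #|S|.
Proof.
move=> [c_inj _] cS; have -> : k = #|[set c (val t) | t : 'I_k]|.
  by rewrite card_imset ?card_ord // => i j /(c_inj _ _ (ltn_ord i) (ltn_ord j))/val_inj.
apply/subset_leq_card/subsetP => _ /imsetP [t _ ->]; exact: cS (ltn_ord t).
Qed.

End CycleSubmatrix.

Section OtherInPair.
Variable T : finType.

Definition other (B : {set T}) y := odflt y [pick z in B :\ y].

Lemma otherP (B : {set T}) y : #|B| = 2 -> y \in B ->
  [/\ other B y \in B, other B y != y &
      forall z, z \in B -> z = y \/ z = other B y].
Proof.
move=> B2 yB; have /cards1P [z Bz] : #|B :\ y| == 1.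
  by move: (cardsD1 y B); rewrite yB B2; lia.
have -> : other B y = z.
  rewrite /other Bz; case: pickP => [z' | /(_ z)]; first by rewrite inE => /eqP.
  by rewrite inE eqxx.
have : z \in B :\ y by rewrite Bz set11.
rewrite !inE => /andP [zy zB]; split=> // w wB.
case: (eqVneq w y) => [->|wy]; [by left | right].
have : w \in B :\ y by rewrite !inE wy wB.
by rewrite Bz inE => /eqP.
Qed.

Lemma otherK (B : {set T}) y : #|B| = 2 -> y \in B -> other B (other B y) = y.
Proof.
move=> B2 yB; have [zB zy _] := otherP B2 yB; have [_ _ Bz] := otherP B2 zB.
by case: (Bz y yB) => // yz; rewrite -yz eqxx in zy.
Qed.

End OtherInPair.

Section CycleDecomposition.
Variables (m n : nat) (A : 'M[bool]_(m, n)) (X : {set 'I_m}) (Y : {set 'I_n}).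

Definition row_support x := [set y in Y | A x y].
Definition col_support y := [set x in X | A x y].

Hypothesis row_support2 : forall x, x \in X -> #|row_support x| = 2.
Hypothesis col_support2 : forall y, y \in Y -> #|col_support y| = 2.

Definition incident : pred ('I_m * 'I_n) :=
  fun p => [&& p.1 \in X, p.2 \in Y & A p.1 p.2].

Definition next_col p := other (row_support p.1) p.2.
Definition step p := (other (col_support (next_col p)) p.1, next_col p).
Definition flip p := (p.1, next_col p).

Lemma next_colP p : incident p ->
  [/\ next_col p \in Y, A p.1 (next_col p), next_col p != p.2 &
      forall y, y \in Y -> A p.1 y -> y = p.2 \/ y = next_col p].
Proof.
case/and3P => xX yY Axy; have yB : p.2 \in row_support p.1 by rewrite inE yY Axy.
have [] := otherP (row_support2 xX) yB; rewrite inE => /andP [zY Axz] zy Bz.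
by split=> // y' y'Y Axy'; apply: Bz; rewrite inE y'Y Axy'.
Qed.

Lemma step_rowP p : incident p ->
  [/\ (step p).1 \in X, A (step p).1 (next_col p), (step p).1 != p.1 &
      forall x, x \in X -> A x (next_col p) -> x = p.1 \/ x = (step p).1].
Proof.
move=> Ip; have [zY Axz _ _] := next_colP Ip; have /and3P [xX _ _] := Ip.
have xB : p.1 \in col_support (next_col p) by rewrite inE xX Axz.
have [] := otherP (col_support2 zY) xB; rewrite inE => /andP [x'X Ax'z] x'x Bx'.
by split=> // x'' x''X Ax''z; apply: Bx'; rewrite inE x''X Ax''z.
Qed.

Lemma incident_step p : incident p -> incident (step p).
Proof.
move=> Ip; have [zY _ _ _] := next_colP Ip; have [x'X Ax'z _ _] := step_rowP Ip.
exact/and3P.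
Qed.

Lemma next_colK p : incident p -> next_col (flip p) = p.2.
Proof.
case/and3P => xX yY Axy; rewrite /next_col /= otherK ?row_support2 //.
by rewrite inE yY Axy.
Qed.

Lemma step_rowK p : incident p ->
  other (col_support (next_col p)) (step p).1 = p.1.
Proof.
move=> Ip; have [zY Axz _ _] := next_colP Ip; have /and3P [xX _ _] := Ip.
by rewrite otherK ?col_support2 // inE xX Axz.
Qed.

Lemma step_inj : {in incident &, injective step}.
Proof.
move=> [x y] [x' y'] Ip Iq [eq_x eq_z].
have eq_xx' : x = x'.
  by move: (step_rowK Ip) (step_rowK Iq); rewrite /step /= eq_x eq_z => -> ->.
subst x'; congr (_, _).
by move: (next_colK Ip) (next_colK Iq); rewrite /flip /= eq_z => -> ->.
Qed.

Lemma step_flip p : incident p -> step (flip (step p)) = flip p.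
Proof.
move=> Ip; rewrite [step (flip _)]/step next_colK ?incident_step //.
by rewrite step_rowK.
Qed.

Variable p0 : 'I_m * 'I_n.
Hypothesis incident_p0 : incident p0.

Definition walk t := iter t step p0.
Definition period := order step p0.

Lemma incident_walk t : incident (walk t).
Proof. by elim: t => //= t; apply: incident_step. Qed.

Lemma walk_period t : walk (t + period) = walk t.
Proof. by rewrite /walk iterD (iter_order_in incident_step step_inj). Qed.

Lemma walk_mod t : walk (t %% period) = walk t.
Proof.
rewrite {2}(divn_eq t period) addnC.
elim: (t %/ period) => [|q IHq]; first by rewrite mul0n addn0.
by rewrite mulSn addnCA addnC walk_period.
Qed.

Lemma walk_inj s t : s < period -> t < period -> walk s = walk t -> s = t.
Proof. by move=> lt_s lt_t e; rewrite -(findex_iter lt_s) -/(walk s) e findex_iter. Qed.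

Lemma flip_walk_shift t u d :
  walk t = flip (walk (u + d)) -> walk (t + d) = flip (walk u).
Proof.
elim: d t => [|d IHd] t; first by rewrite !addn0.
rewrite addnS -addSnnS => e; apply: IHd; rewrite /= e step_flip //.
exact: incident_walk.
Qed.

(* The walk never meets its own mirror image: [flip] reverses [step], so a
   meeting would force a fixed point of [flip] or of [flip \o step]. *)
Lemma walk_neq_flip t u : walk t <> flip (walk u).
Proof.
rewrite -(walk_mod t) -(walk_mod u) -(walk_period (u %% _)) => e.
have lt_tu : t %% period <= u %% period + period.
  by rewrite ltnW // ltn_addl // ltn_pmod // order_gt0.
move: e; set t' := t %% period; set u' := u %% period + period => e.
have [k [eu|eu]] : exists k, u' = t' + k + k \/ u' = (t' + k).+1 + k.
- exists (u' - t')./2; have := odd_double_half (u' - t').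
  by case: odd => /=; lia.
- rewrite eu in e; move/flip_walk_shift: e => e.
  have [_ _ + _] := next_colP (incident_walk (t' + k)).
  by rewrite [X in _ != X](congr1 snd e) eqxx.
- rewrite eu in e; move/flip_walk_shift: e => e.
  have [_ _ + _] := step_rowP (incident_walk (t' + k)).
  by rewrite [X in _ != X](congr1 fst e) eqxx.
Qed.

Definition wrow t := (walk t).1.
Definition wcol t := (walk t).2.

Lemma wrow_mod t : wrow (t %% period) = wrow t.
Proof. by rewrite /wrow walk_mod. Qed.

Lemma wcol_mod t : wcol (t %% period) = wcol t.
Proof. by rewrite /wcol walk_mod. Qed.

Lemma walk_entries t :
  [/\ wrow t \in X, wcol t \in Y, A (wrow t) (wcol t) & A (wrow t) (wcol t.+1)].
Proof.
have /and3P [xX yY Axy] := incident_walk t.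
by have [_ Axz _ _] := next_colP (incident_walk t).
Qed.

Lemma wcol_neq t : wcol t.+1 != wcol t.
Proof. by have [] := next_colP (incident_walk t). Qed.

Lemma wrow_support t y : y \in Y -> A (wrow t) y -> y = wcol t \/ y = wcol t.+1.
Proof. by have [_ _ _] := next_colP (incident_walk t); apply. Qed.

Lemma wcol_support t x : x \in X -> A x (wcol t.+1) -> x = wrow t \/ x = wrow t.+1.
Proof. by have [_ _ _] := step_rowP (incident_walk t); apply. Qed.

Lemma wrow_inj s t : s < period -> t < period -> wrow s = wrow t -> s = t.
Proof.
move=> lt_s lt_t e; have [_ yY Axy _] := walk_entries t; rewrite -e in Axy.
case: (wrow_support yY Axy) => e'.
  apply: walk_inj => //; rewrite [walk s]surjective_pairing [walk t]surjective_pairing.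
  by congr (_, _); [exact: e | exact: esym e'].
case: (@walk_neq_flip t s); rewrite [walk t]surjective_pairing.
by congr (_, _); [exact: esym e | exact: e'].
Qed.

Lemma wcol_inj s t : s < period -> t < period -> wcol s = wcol t -> s = t.
Proof.
wlog lt_st : s t / s < t => [W lt_s lt_t e|lt_s lt_t e].
  case: (ltngtP s t) => // lt; first exact: W.
  by symmetry; apply: W.
case: t lt_t e lt_st => // t lt_t e lt_st.
have [xX _ Axy _] := walk_entries s; rewrite e in Axy.
case: (wcol_support xX Axy) => /wrow_inj e'.
  have est : s = t by apply: e'; lia.
  by move: (wcol_neq t); rewrite -e est eqxx.
by apply: e'.
Qed.

Lemma period_gt1 : 1 < period.
Proof.
rewrite ltnNge; apply/negP => le_p1.
have e : walk 1 = walk 0.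
  have -> : 1 = 0 + period by have := order_gt0 step p0; rewrite -/period; lia.
  exact: walk_period.
by move: (wcol_neq 0); rewrite /wcol e eqxx.
Qed.

Lemma walk_cycle_submx : cycle_submx A period wrow wcol.
Proof.
have period_gt0 : 0 < period by apply: order_gt0.
split=> [|i j lt_i lt_j]; first exact: wcol_inj.
have lt_i1 : i.+1 %% period < period by rewrite ltn_pmod.
apply/idP/orP => [Aij | [] /eqP ->].
  have [_ yY _ _] := walk_entries j; case: (wrow_support yY Aij) => e.
    by left; rewrite (wcol_inj lt_j lt_i e).
  by right; rewrite -(wcol_mod i.+1) in e; rewrite (wcol_inj lt_j lt_i1 e).
  by have [] := walk_entries i.
by rewrite wcol_mod; have [] := walk_entries i.
Qed.

Lemma walk_col_closed t x : x \in X -> A x (wcol t) ->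
  exists2 u, u < period & x = wrow u.
Proof.
have period_gt0 : 0 < period by apply: order_gt0.
have -> : wcol t = wcol (t + period.-1).+1.
  by rewrite -addnS prednK // /wcol walk_period.
move=> xX /(wcol_support xX) [] ->.
  by exists ((t + period.-1) %% period); rewrite ?wrow_mod ?ltn_pmod.
by exists ((t + period.-1).+1 %% period); rewrite ?wrow_mod ?ltn_pmod.
Qed.

Lemma walk_row_closed t y : y \in Y -> A (wrow t) y ->
  exists2 u, u < period & y = wcol u.
Proof.
have period_gt0 : 0 < period by apply: order_gt0.
move=> yY /(wrow_support yY) [] ->.
  by exists (t %% period); rewrite ?wcol_mod ?ltn_pmod.
by exists (t.+1 %% period); rewrite ?wcol_mod ?ltn_pmod.
Qed.

Definition walk_rows := [set wrow (val t) | t : 'I_period].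
Definition walk_cols := [set wcol (val t) | t : 'I_period].

Lemma card_walk_rows : #|walk_rows| = period.
Proof.
rewrite card_imset ?card_ord // => s t.
by move/(wrow_inj (ltn_ord s) (ltn_ord t))/val_inj.
Qed.

Lemma walk_rows_sub : walk_rows \subset X.
Proof. by apply/subsetP => _ /imsetP [t _ ->]; have [] := walk_entries t. Qed.

Lemma row_support_off_walk x : x \in X :\: walk_rows ->
  [set y in Y :\: walk_cols | A x y] = row_support x.
Proof.
rewrite inE => /andP [x_off xX]; apply/setP => y; rewrite !inE.
case: (boolP (y \in Y)) => yY; rewrite ?andbF //=; rewrite !andbT.
apply/andP/idP => [[] // | Axy]; split=> //.
apply/imsetP => -[t _ eq_y]; rewrite eq_y in Axy.
have [u lt_u eq_x] := walk_col_closed xX Axy.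
by move/imsetP: x_off; apply; exists (Ordinal lt_u).
Qed.

Lemma col_support_off_walk y : y \in Y :\: walk_cols ->
  [set x in X :\: walk_rows | A x y] = col_support y.
Proof.
rewrite inE => /andP [y_off yY]; apply/setP => x; rewrite !inE.
case: (boolP (x \in X)) => xX; rewrite ?andbF //=; rewrite !andbT.
apply/andP/idP => [[] // | Axy]; split=> //.
apply/imsetP => -[t _ eq_x]; rewrite eq_x in Axy.
have [u lt_u eq_y] := walk_row_closed yY Axy.
by move/imsetP: y_off; apply; exists (Ordinal lt_u).
Qed.

End CycleDecomposition.

(* Remove the cycle traced by [walk] and recurse; since [#|X|] is odd, some
   cycle along the way has odd length. *)
Lemma two_regular_odd_cycle_submx m n (A : 'M[bool]_(m, n))
    (X : {set 'I_m}) (Y : {set 'I_n}) : odd #|X| ->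
  (forall x, x \in X -> #|row_support A Y x| = 2) ->
  (forall y, y \in Y -> #|col_support A X y| = 2) ->
  exists k, odd_cycle_submx A k.
Proof.
have [N] := ubnP #|X|; elim: N X Y => // N IHN X Y ltXN odd_X row2 col2.
have /card_gt0P [x0 x0X] : 0 < #|X| by case: #|X| odd_X.
have /card_gt0P [y0] : 0 < #|row_support A Y x0| by rewrite row2.
rewrite inE => /andP [y0Y Ax0y0].
have I0 : incident A X Y (x0, y0) by apply/and3P.
set p0 := (x0, y0) in I0; set L := period A X Y p0.
case: (boolP (odd L)) => [odd_L | even_L].
  exists L; split=> //; last by exists (wrow A X Y p0), (wcol A X Y p0);
    exact: walk_cycle_submx.
  rewrite ltn_neqAle (period_gt1 row2 col2 I0) andbT.
  by apply: contraTneq odd_L => <-.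
have rows_sub := walk_rows_sub row2 col2 I0.
have card_off : #|X :\: walk_rows A X Y p0| = #|X| - L.
  by rewrite cardsD (setIidPr rows_sub) (card_walk_rows row2 col2 I0).
have le_LX : L <= #|X| by rewrite -[L](card_walk_rows row2 col2 I0) subset_leq_card.
apply: (IHN (X :\: walk_rows A X Y p0) (Y :\: walk_cols A X Y p0)).
- by rewrite card_off; have := period_gt1 row2 col2 I0; lia.
- by rewrite card_off oddB // odd_X (negbTE even_L).
- by move=> x x_off; rewrite /row_support (row_support_off_walk row2 col2 I0) // row2 //;
    case/setDP: x_off.
- by move=> y y_off; rewrite /col_support (col_support_off_walk row2 col2 I0) // col2 //;
    case/setDP: y_off.
Qed.

Lemma unbalanced_odd_cycle_submx m n (A : 'M[bool]_(m, n)) :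
  ~ balanced_mx A <-> exists k, odd_cycle_submx A k.
Proof.
split=> [/NNPP [k [f [g [odd_k f_inj g_inj row2 col2]]]] | [k /odd_cycle_submx_unbalanced //]].
apply: (@two_regular_odd_cycle_submx _ _ A [set f i | i in 'I_k] [set g j | j in 'I_k]).
- by rewrite card_imset // card_ord.
- move=> _ /imsetP [i _ ->]; rewrite -(row2 i) -(card_imset _ g_inj).
  apply: eq_card => y; rewrite !inE; apply/andP/imsetP => [[/imsetP [j _ ->] Aij] | [j]].
    by exists j; rewrite // inE.
  by rewrite inE => Aij ->; split=> //; apply: imset_f.
- move=> _ /imsetP [j _ ->]; rewrite -(col2 j) -(card_imset _ f_inj).
  apply: eq_card => x; rewrite !inE; apply/andP/imsetP => [[/imsetP [i _ ->] Aij] | [i]].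
    by exists i; rewrite // inE.
  by rewrite inE => Aij ->; split=> //; apply: imset_f.
Qed.

Section IntersectionGraph.
Variables (m n : nat) (A : 'M[bool]_(m, n)).

Lemma GA_of_row R x y : x != y -> A R x -> A R y -> GA A x y.
Proof. by move=> xy Rx Ry; rewrite /GA xy; apply/existsP; exists R; rewrite Rx Ry. Qed.

Lemma GA_common_row x y : GA A x y -> x != y /\ exists R, A R x && A R y.
Proof. by case/andP => xy /existsP. Qed.

Lemma GA_sym x y : GA A x y = GA A y x.
Proof.
rewrite /GA eq_sym; congr (_ && _).
by apply/existsP/existsP => -[R]; exists R; rewrite andbC.
Qed.

Lemma row_clique (S K : {set 'I_n}) R : K \subset S ->
  (forall x, x \in K -> A R x) -> is_clique S (GA A) K.
Proof. by move=> KS RK; split=> // x y xK yK xy; apply: GA_of_row xy (RK x xK) (RK y yK). Qed.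

Lemma maxclique2_row (S : {set 'I_n}) x y R z : is_maxclique S (GA A) [set x; y] ->
  z \in S -> A R x -> A R y -> A R z -> (z == x) || (z == y).
Proof.
move=> [[xyS _] xymax] zS Rx Ry Rz; rewrite -in_set2.
have xS := subsetP xyS _ (set21 x y); have yS := subsetP xyS _ (set22 x y).
rewrite -(xymax [set x; y; z]) ?inE ?eqxx ?orbT //.
  by apply: (@row_clique _ _ R) => [|w]; rewrite ?subUset ?sub1set ?xS ?yS ?zS // !inE
    => /orP [/orP [] | ] /eqP ->.
by rewrite subsetUl.
Qed.

Definition common_row (r0 : 'I_m) x y := odflt r0 [pick R | A R x && A R y].

Lemma common_rowP r0 x y : GA A x y -> A (common_row r0 x y) x && A (common_row r0 x y) y.
Proof.
case/GA_common_row => _ [R ARxy]; rewrite /common_row.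
by case: pickP => [R' -> // | /(_ R)]; rewrite ARxy.
Qed.

Lemma chordless_cycle_submx k (c : nat -> 'I_n) : 0 < k ->
  (forall i j, i < k -> j < k -> c i = c j -> i = j) ->
  (forall i, i < k -> GA A (c i) (c (i.+1 %% k))) ->
  (forall R i j, i < k -> j < k -> A R (c i) -> A R (c (i.+1 %% k)) -> A R (c j) ->
     (j == i) || (j == i.+1 %% k)) ->
  exists r, cycle_submx A k r c.
Proof.
move=> k0 c_inj edge chordless; have [_ [r0 _]] := GA_common_row (edge 0 k0).
exists (fun i => common_row r0 (c i) (c (i.+1 %% k))); split=> // i j lt_i lt_j.
have /andP [Ri Ri1] := common_rowP r0 (edge i lt_i).
by apply/idP/idP => [/(chordless _ _ _ lt_i lt_j Ri Ri1) | /orP [] /eqP ->].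
Qed.

Hypothesis lin : linear_mx A.

Lemma linear_common_row_eq x y R R' :
  x != y -> A R x -> A R y -> A R' x -> A R' y -> R = R'.
Proof.
move=> xy Rx Ry R'x R'y; apply/eqP/negPn/negP => RR'; apply: lin.
by exists R, R', x, y; split=> //; rewrite Rx Ry R'x R'y.
Qed.

Hypothesis noC3 : ~ has_C3 A.

Lemma triangle_common_row x y z : x != y -> y != z -> x != z ->
  GA A x y -> GA A y z -> GA A x z -> exists R, [&& A R x, A R y & A R z].
Proof.
move=> xy yz xz /GA_common_row [_ [R1 /andP [R1x R1y]]]
  /GA_common_row [_ [R2 /andP [R2y R2z]]] /GA_common_row [_ [R3 /andP [R3x R3z]]].
case R1z : (A R1 z); first by exists R1; rewrite R1x R1y R1z.
case R2x : (A R2 x); first by exists R2; rewrite R2x R2y R2z.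
case R3y : (A R3 y); first by exists R3; rewrite R3x R3y R3z.
exfalso; apply/noC3/has_C3_cycle_submx.
exists (fun t => if t == 0 then R1 else if t == 1 then R2 else R3).
exists (fun t => if t == 0 then x else if t == 1 then y else z); split.
  move=> [|[|[|i]]] [|[|[|j]]] //= _ _ /eqP;
  by rewrite ?(negbTE xy) ?(negbTE yz) ?(negbTE xz) // eq_sym
    ?(negbTE xy) ?(negbTE yz) ?(negbTE xz).
by move=> [|[|[|i]]] [|[|[|j]]].
Qed.

Lemma clique_common_row (S K : {set 'I_n}) : is_clique S (GA A) K -> 2 < #|K| ->
  exists R, forall x, x \in K -> A R x.
Proof.
move=> [_ cl] /ltnW /card_gt1P [x [y [xK yK xy]]].
have [_ [R /andP [Rx Ry]]] := GA_common_row (cl _ _ xK yK xy).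
exists R => z zK; case: (eqVneq z x) => [-> // | zx]; case: (eqVneq z y) => [-> // | zy].
have yz : y != z by rewrite eq_sym.
have xz : x != z by rewrite eq_sym.
have [R' /and3P [R'x R'y R'z]] :=
  triangle_common_row xy yz xz (cl _ _ xK yK xy) (cl _ _ yK zK yz) (cl _ _ xK zK xz).
by rewrite (linear_common_row_eq xy Rx Ry R'x R'y).
Qed.

Lemma maxclique_row_set (S K : {set 'I_n}) R : is_maxclique S (GA A) K ->
  (forall x, x \in K -> A R x) -> K = [set w in S | A R w].
Proof.
move=> [[KS _] Kmax] RK; apply/esym/Kmax.
  apply: (@row_clique _ _ R) => [|x]; first by apply/subsetP => x; rewrite inE => /andP [].
  by rewrite inE => /andP [].
by apply/subsetP => x xK; rewrite inE (subsetP KS _ xK) RK.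
Qed.

Lemma maxclique_eq (S K1 K2 : {set 'I_n}) x y :
  is_maxclique S (GA A) K1 -> is_maxclique S (GA A) K2 -> 2 < #|K1| -> 2 < #|K2| ->
  x != y -> x \in K1 -> y \in K1 -> x \in K2 -> y \in K2 -> K1 = K2.
Proof.
move=> K1max K2max K1big K2big xy x1 y1 x2 y2.
have [R1 R1K] := clique_common_row K1max.1 K1big.
have [R2 R2K] := clique_common_row K2max.1 K2big.
have eR := linear_common_row_eq xy (R1K _ x1) (R1K _ y1) (R2K _ x2) (R2K _ y2).
by rewrite (maxclique_row_set K1max R1K) (maxclique_row_set K2max R2K) eR.
Qed.

Lemma diamond_free_GA : diamond_free [set: 'I_n] (GA A).
Proof.
move=> [a [b [c [d [uniq_abcd _ /and5P [ab ac bc ad bd] ncd]]]]].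
move: uniq_abcd; rewrite /= !inE !negb_or => /and4P [/and3P [a_b a_c a_d] /andP [b_c b_d] c_d _].
have [R /and3P [Ra Rb Rc]] := triangle_common_row a_b b_c a_c ab bc ac.
have [R' /and3P [R'a R'b R'd]] := triangle_common_row a_b b_d a_d ab bd ad.
rewrite -(linear_common_row_eq a_b Ra Rb R'a R'b) in R'd.
by rewrite (GA_of_row c_d Rc R'd) in ncd.
Qed.

End IntersectionGraph.

Section InducedCycles.
Variables (m n : nat) (A : 'M[bool]_(m, n)).

(* Adjacency to a member of a row propagates to the whole row; an abstraction
   covering both G_A and G_A minus the edge sets of some inscribed cliques. *)
Definition row_closed (S : {set 'I_n}) (e : rel 'I_n) :=
  forall R x y z, y \in S -> A R x -> A R y -> A R z -> x != z -> e x y -> e x z.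

Lemma row_closed_GA (S : {set 'I_n}) : row_closed S (GA A).
Proof. by move=> R x y z _ Rx _ Rz xz _; apply: GA_of_row xz Rx Rz. Qed.

Lemma odd_hole_cycle_submx (S : {set 'I_n}) (e : rel 'I_n) :
  subrel e (GA A) -> row_closed S e -> has_odd_hole S e ->
  exists k c, [/\ odd k, 4 < k, exists r, cycle_submx A k r c,
    (forall t, t < k -> c t \in S) &
    forall a b, a < k -> b < k -> e (c a) (c b) = cycle_adj k a b].
Proof.
move=> eGA closed [k' [h [odd_k k5 h_inj hS hE]]].
case: k' h odd_k k5 h_inj hS hE => // k h odd_k k5 h_inj hS hE.
pose c t := h (inord t).
have cE a b : a < k.+1 -> b < k.+1 -> e (c a) (c b) = cycle_adj k.+1 a b.
  by move=> lt_a lt_b; rewrite /c hE cyc_adj_inord.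
have c_inj a b : a < k.+1 -> b < k.+1 -> c a = c b -> a = b.
  by move=> lt_a lt_b /h_inj/(congr1 val); rewrite /= !inordK.
have lt_succ i : i < k.+1 -> i.+1 %% k.+1 < k.+1 by rewrite ltn_pmod.
have edge i : i < k.+1 -> e (c i) (c (i.+1 %% k.+1)).
  by move=> lt_i; rewrite cE ?lt_succ ?cycle_adj_succ.
have edge' i : i < k.+1 -> e (c (i.+1 %% k.+1)) (c i).
  by move=> lt_i; rewrite cE ?lt_succ // cycle_adj_sym cycle_adj_succ.
exists k.+1, c; split=> //; last by move=> t _; apply: hS.
apply: chordless_cycle_submx => // [i lt_i | R i j lt_i lt_j Ri Ri1 Rj].
  exact/eGA/edge.
apply/negPn/negP; rewrite negb_or => /andP [ji ji1].
have cij : c i != c j by apply: contra ji => /eqP/(c_inj _ _ lt_i lt_j) ->.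
have ci1j : c (i.+1 %% k.+1) != c j.
  by apply: contra ji1 => /eqP/(c_inj _ _ (lt_succ _ lt_i) lt_j) ->.
have := closed _ _ _ _ (hS _) Ri Ri1 Rj cij (edge _ lt_i).
have := closed _ _ _ _ (hS _) Ri1 Ri Rj ci1j (edge' _ lt_i).
rewrite !cE ?lt_succ // => adj_i1j adj_ij.
exact: (cycle_adj_triangle (ltnW k5) lt_i (lt_succ _ lt_i) lt_j (cycle_adj_succ _ _)
  adj_i1j adj_ij).
Qed.

Lemma multisun_odd_cycle_submx (S : {set 'I_n}) :
  multisun S (GA A) -> exists k, odd_cycle_submx A k.
Proof.
case=> odd_S _ [k' [f [f_inj f_onto rimE inscribed_off]]].
have card_S : #|S| = k' by rewrite -f_onto card_imset // card_ord.
have fS i : f i \in S by rewrite -f_onto imset_f.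
rewrite card_S in odd_S.
case: k' f f_inj f_onto rimE inscribed_off card_S odd_S fS
  => // k f f_inj f_onto rimE inscribed_off card_S odd_S fS.
have k3 : 2 < k.+1.
  case: k => [|[|k]] in f f_inj f_onto rimE inscribed_off card_S odd_S fS *; [|done|done].
  have Smax : is_maxclique S (GA A) S.
    split=> [|K [KS _] SK]; last by apply/eqP; rewrite eqEsubset KS.
    split=> // x y; rewrite -f_onto => /imsetP [i _ ->] /imsetP [j _ ->].
    by rewrite (ord1 i) (ord1 j) eqxx.
  have S_ne2 : #|S| != 2 by rewrite card_S.
  by have := inscribed_off S Smax S_ne2 ord0 ord0 (fS _) (fS _).
pose c t := f (inord t).
have c_inj a b : a < k.+1 -> b < k.+1 -> c a = c b -> a = b.
  by move=> lt_a lt_b /f_inj/(congr1 val); rewrite /= !inordK.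
have lt_succ i : i < k.+1 -> i.+1 %% k.+1 < k.+1 by rewrite ltn_pmod.
have rim i : i < k.+1 -> is_maxclique S (GA A) [set c i; c (i.+1 %% k.+1)].
  move=> lt_i; apply/rimE.
    by rewrite -val_eqE /= !inordK ?lt_succ // eq_sym succ_modn_neq // ltnW.
  by rewrite cyc_adj_inord ?cycle_adj_succ //; exact: lt_succ.
suff [r cyc] : exists r, cycle_submx A k.+1 r c by exists k.+1; split=> //; exists r, c.
apply: chordless_cycle_submx => // [i lt_i | R i j lt_i lt_j Ri Ri1 Rj].
  have [[_ cl] _] := rim i lt_i; apply: cl; rewrite ?inE ?eqxx ?orbT //.
  apply: contra_neq (succ_modn_neq (ltnW k3) lt_i).
  by move=> /(c_inj _ _ lt_i (lt_succ _ lt_i)).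
by case/orP: (maxclique2_row (rim i lt_i) (fS _) Ri Ri1 Rj) => /eqP/c_inj ->;
  rewrite ?eqxx ?orbT // lt_succ.
Qed.

End InducedCycles.

Lemma balanced_obstruction_free m n (A : 'M[bool]_(m, n)) :
  linear_mx A -> balanced_mx A ->
  [/\ ~ has_C3 A, diamond_free [set: 'I_n] (GA A), ~ has_odd_hole [set: 'I_n] (GA A) &
      ~ exists S : {set 'I_n}, HOH_free_multisun S (GA A)].
Proof.
move=> lin bal; have no_odd_cycle k : ~ odd_cycle_submx A k.
  by move/odd_cycle_submx_unbalanced.
have noC3 : ~ has_C3 A.
  by case/has_C3_cycle_submx => r [c cyc]; apply: (no_odd_cycle 3); split=> //; exists r, c.
split=> //; first exact: diamond_free_GA.
  case/(odd_hole_cycle_submx (fun _ _ => id) (@row_closed_GA _ _ A _))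
    => k [c [odd_k k5 [r cyc] _ _]].
  by apply: (no_odd_cycle k); split=> //; [lia | exists r, c].
by case=> S [/multisun_odd_cycle_submx [k /no_odd_cycle]].
Qed.

Section MinimalOddCycle.
Variables (m n : nat) (A : 'M[bool]_(m, n)).
Hypotheses (lin : linear_mx A) (noC3 : ~ has_C3 A).
Variables (k : nat) (r : nat -> 'I_m) (c : nat -> 'I_n).
Hypotheses (cyc : cycle_submx A k r c) (odd_k : odd k) (k_gt4 : 4 < k).
Hypothesis minimal : forall k', k' < k -> ~ odd_cycle_submx A k'.

Let k_gt0 : 0 < k. Proof. lia. Qed.
Let lt_succ i : i < k -> i.+1 %% k < k. Proof. by rewrite ltn_pmod. Qed.
Let c_inj i j : i < k -> j < k -> c i = c j -> i = j. Proof. exact: cyc.1. Qed.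
Let rowE i j : i < k -> j < k -> A (r i) (c j) = (j == i) || (j == i.+1 %% k).
Proof. exact: cyc.2. Qed.

Lemma cycle_entry i : i < k -> A (r i) (c i).
Proof. by move=> lt_i; rewrite rowE // eqxx. Qed.

Lemma cycle_entry_succ i : i < k -> A (r i) (c (i.+1 %% k)).
Proof. by move=> lt_i; rewrite rowE ?lt_succ // eqxx orbT. Qed.

Lemma cycle_col_neq_succ i : i < k -> c i != c (i.+1 %% k).
Proof.
move=> lt_i; apply: contra_neq (succ_modn_neq (ltnW (ltnW (ltnW k_gt4))) lt_i).
by move/(c_inj lt_i (lt_succ lt_i)).
Qed.

(* A row meeting [c s] and [c (s + d)] but no column strictly in between
   closes a cycle of order [d + 1 < k]; by minimality it is even. *)
Lemma chord_arc_odd s d R : s < k -> 2 <= d -> d <= k - 2 ->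
  A R (c s) -> A R (c ((s + d) %% k)) ->
  (forall l, 0 < l -> l < d -> ~~ A R (c ((s + l) %% k))) -> odd d.
Proof.
move=> lt_s d2 dk Rs Rsd R_off; apply/negPn/negP => even_d.
apply: (@minimal d.+1); first lia.
split; [by rewrite /= even_d | lia | ].
exists (fun t => if t < d then r ((t + s) %% k) else R), (fun t => c ((t + s) %% k)).
apply: cycle_submx_chord (cycle_submx_rot s k_gt0 cyc) _ _ _ _ _ => //; first lia.
- by rewrite add0n modn_small.
- by rewrite addnC.
- by move=> l l0 ld; rewrite addnC; apply: R_off.
Qed.

(* Otherwise the row would split the cycle into two shorter ones, one of
   them odd since [k] is. *)
Lemma row_third_column R i j : i < k -> j < k -> i != j -> ~~ cycle_adj k i j ->
  A R (c i) -> A R (c j) -> exists l, [/\ l < k, l != i, l != j & A R (c l)].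
Proof.
move=> lt_i lt_j ij nadj Ri Rj; apply: NNPP => no_third.
have only l : l < k -> A R (c l) -> l = i \/ l = j.
  move=> lt_l Rl; case: (eqVneq l i) => [|li]; [by left | right].
  by apply/eqP/negPn/negP => lj; apply: no_third; exists l.
clear no_third; wlog lt_ij : i j lt_i lt_j ij nadj Ri Rj only / i < j.
  move=> W; case: (ltngtP i j) => [|gt_ij|eq_ij]; first exact: W.
    apply: (W j i) => //; first by rewrite eq_sym.
      by rewrite cycle_adj_sym.
    by move=> l lt_l /(only _ lt_l) [] ->; [right | left].
  by rewrite eq_ij eqxx in ij.
set d := j - i.
have [d2 dk] : 2 <= d /\ d <= k - 2.
  by move: nadj; rewrite /cycle_adj (succ_modn lt_i) (succ_modn lt_j) /d; do 2!case: ifP; lia.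
have odd_d : odd d.
  apply: (chord_arc_odd lt_i d2 dk Ri); first by rewrite /d subnKC ?modn_small // ltnW.
  move=> l l0 ld; rewrite modn_small; last lia.
  by apply/negP => /(only _ _) []; lia.
have odd_kd : odd (k - d).
  apply: (chord_arc_odd lt_j _ _ Rj); try lia.
    have -> : j + (k - d) = i + k by rewrite /d; lia.
    by rewrite modnDr modn_small.
  move=> l l0 ld; rewrite modn_double; last lia.
  by case: ifP => lt_jl; apply/negP => /(only _ _) []; lia.
move: odd_k; have -> : k = d + (k - d) by lia.
by rewrite oddD odd_d odd_kd.
Qed.

Definition cycle_col (t : 'I_k) := c t.
Definition cycle_cols := [set cycle_col t | t in 'I_k].

Lemma mem_cycle_cols t : t < k -> c t \in cycle_cols.
Proof. by move=> lt_t; apply/imsetP; exists (Ordinal lt_t). Qed.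

Lemma cycle_colsP x : x \in cycle_cols -> exists2 t, t < k & x = c t.
Proof. by case/imsetP => t _ ->; exists t. Qed.

Lemma cycle_col_inj : injective cycle_col.
Proof. by move=> s t /(c_inj (ltn_ord s) (ltn_ord t))/val_inj. Qed.

Lemma card_cycle_cols : #|cycle_cols| = k.
Proof. by rewrite card_imset ?card_ord //; apply: cycle_col_inj. Qed.

Lemma cycle_edge i : i < k -> GA A (c i) (c (i.+1 %% k)).
Proof.
by move=> lt_i; apply: GA_of_row (cycle_col_neq_succ lt_i) (cycle_entry lt_i)
  (cycle_entry_succ lt_i).
Qed.

(* A common neighbour of [c i] and [c (i+1)] would share their row [r i]. *)
Lemma no_common_neighbour i z : i < k -> z \in cycle_cols ->
  z != c i -> z != c (i.+1 %% k) -> GA A z (c i) -> GA A z (c (i.+1 %% k)) -> False.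
Proof.
move=> lt_i zS z_i z_i1; rewrite !(GA_sym _ z) => adj_i adj_i1.
rewrite eq_sym in z_i; rewrite eq_sym in z_i1.
have [R /and3P [Ri Ri1 Rz]] := triangle_common_row noC3 (cycle_col_neq_succ lt_i)
  z_i1 z_i (cycle_edge lt_i) adj_i1 adj_i.
rewrite (linear_common_row_eq lin (cycle_col_neq_succ lt_i) Ri Ri1 (cycle_entry lt_i)
  (cycle_entry_succ lt_i)) in Rz.
have [t lt_t eq_z] := cycle_colsP zS; subst z.
by move: Rz z_i z_i1; rewrite rowE // => /orP [] /eqP ->; rewrite eqxx.
Qed.

Lemma rim_maxclique i : i < k -> is_maxclique cycle_cols (GA A) [set c i; c (i.+1 %% k)].
Proof.
move=> lt_i; split.
  apply: (@row_clique _ _ A _ _ (r i)) => [|x].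
    by apply/subsetP => x; rewrite !inE => /orP [] /eqP ->; rewrite mem_cycle_cols ?lt_succ.
  by rewrite !inE => /orP [] /eqP ->; rewrite ?cycle_entry ?cycle_entry_succ.
move=> K [KS cl] rimK; apply/eqP; rewrite eqEsubset rimK andbT; apply/subsetP => z zK.
rewrite !inE; apply/negPn/negP; rewrite negb_or => /andP [z_i z_i1].
have iK : c i \in K by apply: (subsetP rimK); rewrite !inE eqxx.
have i1K : c (i.+1 %% k) \in K by apply: (subsetP rimK); rewrite !inE eqxx orbT.
exact: (no_common_neighbour lt_i (subsetP KS _ zK) z_i z_i1 (cl _ _ zK iK z_i)
  (cl _ _ zK i1K z_i1)).
Qed.

Lemma rim_not_in_big_clique i K : i < k -> is_clique cycle_cols (GA A) K ->
  c i \in K -> c (i.+1 %% k) \in K -> #|K| <= 2.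
Proof.
move=> lt_i [KS cl] iK i1K; rewrite leqNgt; apply/negP => K_gt2.
have : ~~ (K \subset [set c i; c (i.+1 %% k)]).
  by apply/negP => /subset_leq_card; rewrite cards2; case: (_ != _); lia.
case/subsetPn => z zK; rewrite !inE negb_or => /andP [z_i z_i1].
exact: (no_common_neighbour lt_i (subsetP KS _ zK) z_i z_i1 (cl _ _ zK iK z_i)
  (cl _ _ zK i1K z_i1)).
Qed.

Lemma maxclique_gt2 K : is_maxclique cycle_cols (GA A) K -> #|K| != 2 -> 2 < #|K|.
Proof.
move=> [[KS cl] Kmax] K_ne2; rewrite ltn_neqAle eq_sym K_ne2 /= leqNgt; apply/negP => K_lt2.
have [t lt_t KE] : exists2 t, t < k & K \subset [set c t; c (t.+1 %% k)].
  case: (set_0Vmem K) => [-> | [x xK]]; first by exists 0; rewrite ?sub0set.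
  have [t lt_t eq_x] := cycle_colsP (subsetP KS _ xK); exists t => //.
  apply/subsetP => y yK; rewrite !inE -eq_x; apply/orP; left.
  apply/negPn/negP => yx; have : 1 < #|K| by apply/card_gt1P; exists y, x.
  by rewrite ltnNge -ltnS K_lt2.
move: K_lt2; rewrite -(Kmax _ (rim_maxclique lt_t).1 KE) cards2 cycle_col_neq_succ //.
Qed.

Lemma cycle_cols_multisun_cycle : multisun_cycle cycle_cols (GA A) cycle_col.
Proof.
split=> //; first exact: cycle_col_inj.
  move=> i j ij; split=> [ij_max | /orP [] /eqP eq_ij].
    apply/negPn/negP => nadj; have ij' : val i != val j by [].
    have cij : cycle_col i != cycle_col j by apply: contra_neq ij => /cycle_col_inj.
    have [_ cl] := ij_max.1.
    have [_ [R /andP [Ri Rj]]] := GA_common_row (cl _ _ (set21 _ _) (set22 _ _) cij).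
    have [l [lt_l li lj Rl]] := row_third_column (ltn_ord i) (ltn_ord j) ij' nadj Ri Rj.
    case/orP: (maxclique2_row ij_max (mem_cycle_cols lt_l) Ri Rj Rl) => /eqP.
      by move/(c_inj lt_l (ltn_ord i)) => eq_l; rewrite eq_l eqxx in li.
    by move/(c_inj lt_l (ltn_ord j)) => eq_l; rewrite eq_l eqxx in lj.
    by have := rim_maxclique (ltn_ord i); rewrite /cycle_col -eq_ij.
  by have := rim_maxclique (ltn_ord j); rewrite /cycle_col -eq_ij setUC.
move=> K Kmax K_ne2 i j iK jK; have := maxclique_gt2 Kmax K_ne2.
rewrite ltnNge; apply: contra => /orP [] /eqP eq_ij.
  by apply: (rim_not_in_big_clique (ltn_ord i) Kmax.1 iK); rewrite -eq_ij.
by apply: (rim_not_in_big_clique (ltn_ord j) Kmax.1 jK); rewrite -eq_ij.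
Qed.

Lemma cycle_cols_multisun : multisun cycle_cols (GA A).
Proof.
split; [by rewrite card_cycle_cols | | by exists k, cycle_col; apply: cycle_cols_multisun_cycle].
move=> [a [b [c' [d [abcd_uniq _ adj ncd]]]]]; apply: (diamond_free_GA lin noC3).
by exists a, b, c', d; split=> //; rewrite /= !inE.
Qed.

Lemma cycle_cols_cover r' c' x : cycle_submx A k r' c' ->
  (forall t, t < k -> c' t \in cycle_cols) -> x \in cycle_cols -> exists2 a, a < k & x = c' a.
Proof.
move=> [c'_inj _] c'S; have sub : [set c' (val t) | t : 'I_k] \subset cycle_cols.
  by apply/subsetP => _ /imsetP [t _ ->]; apply: c'S (ltn_ord t).
have/eqP <- : [set c' (val t) | t : 'I_k] == cycle_cols.
  rewrite eqEcard sub card_cycle_cols card_imset ?card_ord ?leqnn //.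
  by move=> s t /(c'_inj _ _ (ltn_ord s) (ltn_ord t))/val_inj.
by case/imsetP => t _ ->; exists t.
Qed.

Section SubMultisun.
Variable D : {set {set 'I_n}}.
Hypothesis D_inscribed : forall K, K \in D -> inscribed cycle_cols (GA A) K.

Lemma delete_inscribed_row_closed : row_closed A cycle_cols (delete_cliques (GA A) D).
Proof.
move=> R x y z yS Rx Ry Rz xz /andP [_ xy_kept].
rewrite /delete_cliques (GA_of_row xz Rx Rz) /=; apply: contra xy_kept.
case/existsP => K /and3P [KD xK zK]; have [Kmax K_ne2] := D_inscribed KD.
have [RK RK_all] := clique_common_row lin noC3 Kmax.1 (maxclique_gt2 Kmax K_ne2).
have eR := linear_common_row_eq lin xz (RK_all _ xK) (RK_all _ zK) Rx Rz.
by apply/existsP; exists K; rewrite KD xK (maxclique_row_set Kmax RK_all) inE yS eR Ry.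
Qed.

Lemma inscribed_kept K0 u v : inscribed cycle_cols (GA A) K0 -> K0 \notin D ->
  u \in K0 -> v \in K0 -> u != v -> delete_cliques (GA A) D u v.
Proof.
move=> [K0max K0_ne2] K0D uK0 vK0 uv; rewrite /delete_cliques (K0max.1.2 _ _ uK0 vK0 uv).
apply: contra K0D => /existsP [K /and3P [KD uK vK]]; have [Kmax K_ne2] := D_inscribed KD.
by rewrite -(maxclique_eq lin noC3 Kmax K0max (maxclique_gt2 Kmax K_ne2)
  (maxclique_gt2 K0max K0_ne2) uv uK vK uK0 vK0).
Qed.

(* An odd hole after the deletion would be an odd cycle submatrix on at most
   [k] columns of the multisun, hence on all of them; but then a kept
   inscribed clique would be a triangle in it. *)
Lemma sub_multisun_hole_free : (exists2 K0, inscribed cycle_cols (GA A) K0 & K0 \notin D) ->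
  ~ has_odd_hole cycle_cols (delete_cliques (GA A) D).
Proof.
move=> [K0 K0ins K0D].
have eGA : subrel (delete_cliques (GA A) D) (GA A) by move=> x y /andP [].
case/(odd_hole_cycle_submx eGA delete_inscribed_row_closed)
  => L [c' [odd_L L_gt4 [r' cyc'] c'S c'E]].
have eq_Lk : L = k.
  apply/eqP; rewrite eqn_leq -{1}card_cycle_cols (cycle_submx_card cyc' c'S) leqNgt /=.
  by apply/negP => lt_Lk; apply: (minimal lt_Lk); split=> //; [lia | exists r', c'].
subst L; have [K0max K0_ne2] := K0ins; have K0S := K0max.1.1.
have [x [y [z [[xK yK zK] [xy yz zx]]]]] := card_gt2P (maxclique_gt2 K0max K0_ne2).
have [a lt_a eq_x] := cycle_cols_cover cyc' c'S (subsetP K0S _ xK).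
have [b lt_b eq_y] := cycle_cols_cover cyc' c'S (subsetP K0S _ yK).
have [d lt_d eq_z] := cycle_cols_cover cyc' c'S (subsetP K0S _ zK).
have xz : x != z by rewrite eq_sym.
move: (inscribed_kept K0ins K0D xK yK xy) (inscribed_kept K0ins K0D yK zK yz)
  (inscribed_kept K0ins K0D xK zK xz).
rewrite eq_x eq_y eq_z !c'E // => adj_ab adj_bd adj_ad.
exact: cycle_adj_triangle (ltnW L_gt4) lt_a lt_b lt_d adj_ab adj_bd adj_ad.
Qed.

End SubMultisun.

End MinimalOddCycle.

Lemma minimal_odd_cycle_submx m n (A : 'M[bool]_(m, n)) k : odd_cycle_submx A k ->
  exists k', odd_cycle_submx A k' /\ forall k'', k'' < k' -> ~ odd_cycle_submx A k''.
Proof.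
elim/ltn_ind: k => k IHk cyc_k.
case: (classic (exists2 k', k' < k & odd_cycle_submx A k')) => [[k' lt_k' cyc_k'] | none].
  exact: IHk lt_k' cyc_k'.
by exists k; split=> // k' lt_k' cyc_k'; apply: none; exists k'.
Qed.

Lemma obstruction_free_balanced m n (A : 'M[bool]_(m, n)) :
  linear_mx A -> ~ has_C3 A -> ~ has_odd_hole [set: 'I_n] (GA A) ->
  ~ (exists S : {set 'I_n}, HOH_free_multisun S (GA A)) -> balanced_mx A.
Proof.
move=> lin noC3 no_hole no_msun; apply: NNPP.
case/unbalanced_odd_cycle_submx => k0 /minimal_odd_cycle_submx
  [k [[odd_k k_gt2 [r [c cyc]]] minimal]].
have [eq_k3 | k_ne3] := eqVneq k 3.
  by subst k; apply/noC3/has_C3_cycle_submx; exists r, c.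
have k_ne4 : k != 4 by apply: contraTneq odd_k => ->.
have k_gt4 : 4 < k by lia.
apply: no_msun; exists (cycle_cols k c); split.
- exact (cycle_cols_multisun lin noC3 cyc odd_k k_gt4 minimal).
- move=> [L [h [odd_L L_gt4 h_inj _ hE]]]; apply: no_hole.
  by exists L, h; split=> // i; rewrite inE.
- move=> D [_ D_inscribed [K0 [K0ins K0D]]].
  by apply: (sub_multisun_hole_free lin noC3 cyc odd_k k_gt4 minimal D_inscribed); exists K0.
Qed.

Theorem proposition4 (m n : nat) (A : 'M[bool]_(m, n)) :
  linear_mx A ->
  (balanced_mx A <->
   [/\ ~ has_C3 A,
       diamond_free [set: 'I_n] (GA A),
       ~ has_odd_hole [set: 'I_n] (GA A) &
       ~ exists S : {set 'I_n}, HOH_free_multisun S (GA A)]).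
Proof.
move=> lin; split; first exact: balanced_obstruction_free.
by case=> noC3 _ no_hole no_msun; apply: obstruction_free_balanced.
Qed.
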